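(* Let $p$ be an odd prime, $r,k\in\mathbb{Z}_{>0}$, $\boldsymbol{T}=(T_1,\dots,T_r)$, and let $g(\boldsymbol{T})\in1+(T_1,\dots,T_r)^k\,\mathbb{Q}_p[[\boldsymbol{T}]]$ converge on some neighbourhood of $\boldsymbol{0}$ in $\mathbb{Q}_p^r$. Let $(\boldsymbol{x}^{(n)})_{n\ge0}$ be a sequence in $\mathbb{Q}_p^r$ with $\mathrm{ord}_p(x_i^{(n)})\ge n$ for all $n\ge0$ and $i=1,\dots,r$. Then $g(\boldsymbol{x}^{(n)})$ converges for all sufficiently large $n$, and for every integer $m<k$, \[\lim_{n\to\infty}\frac{1}{p^{mn}}\log_p\big(g(\boldsymbol{x}^{(n)})\big)=0.\]
   Context: $\log_p$ denotes the Iwasawa $p$-adic logarithm on $\mathbb{Q}_p^\times$ (normalised by $\log_p(p)=0$), and $\mathrm{ord}_p$ the $p$-adic valuation. *)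

(* There is no p-adic library available, so Q_p is given
   axiomatically: a field K with a valuation ord : K -> int such that
   ord p = 1, K is complete for ord and Q is dense in K.  Such a pair
   (K, ord) is unique up to valuation-preserving isomorphism (it is the
   completion of Q for the p-adic valuation), i.e. it IS Q_p. *)
From mathcomp Require Import all_boot all_order all_algebra.
From Stdlib Require Import ClassicalEpsilon.
Set Implicit Arguments. Unset Strict Implicit. Unset Printing Implicit Defensive.
Import Order.TTheory GRing.Theory Num.Theory.
Local Open Scope ring_scope.

Section Padic.
Variable K : fieldType.
Variable ord : K -> int.

(* "ord_p(x) >= N", with the convention ord_p(0) = +oo *)
Definition ordge (x : K) (N : int) : Prop := x = 0 \/ N <= ord x.

Definition conv_to (u : nat -> K) (l : K) : Prop :=
  forall N : int, exists M : nat, forall n : nat, (M <= n)%N -> ordge (u n - l) N.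

Definition cauchy (u : nat -> K) : Prop :=
  forall N : int, exists M : nat, forall m n : nat,
    (M <= m)%N -> (M <= n)%N -> ordge (u m - u n) N.

Record is_Qp (p : nat) : Prop := IsQp {
  ord_mul : forall x y, x != 0 -> y != 0 -> ord (x * y) = ord x + ord y;
  ord_add : forall x y, x != 0 -> y != 0 -> x + y != 0 ->
              Num.min (ord x) (ord y) <= ord (x + y);
  ord_p : ord (p%:R) = 1;
  Qp_complete : forall u, cauchy u -> exists l, conv_to u l;
  Qp_Q_dense : forall (z : K) (N : int), exists q : rat, ordge (z - ratr q) N
}.

(* a limit (chosen by classical choice; unique when it exists) *)
Definition lim_K (u : nat -> K) : K :=
  epsilon (inhabits 0) (fun l => conv_to u l).

Definition log_series (u : K) : K :=
  lim_K (fun n => \sum_(1 <= j < n.+1) (-1) ^+ j.+1 * (u - 1) ^+ j / j%:R).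

(* Iwasawa p-adic logarithm, log_p(p) = 0:
   for x = p^a * zeta * u (zeta a (p-1)-th root of unity, u in 1 + pZ_p),
   x^(p-1) * p^(-(p-1) a) = u^(p-1), so log_p x = log(u^(p-1)) / (p-1). *)
Definition logp (p : nat) (x : K) : K :=
  if x == 0 then 0 else
  log_series (x ^+ p.-1 * (p%:R) ^ (- (p.-1%:Z * ord x))) / (p.-1)%:R.

Definition mono (r : nat) (al : {ffun 'I_r -> nat}) (y : 'I_r -> K) : K :=
  \prod_(i < r) y i ^+ al i.

Definition deg (r : nat) (al : {ffun 'I_r -> nat}) : nat := \sum_(i < r) al i.

(* unconditional summability of a family indexed by multi-indices *)
Definition has_sum (r : nat) (t : {ffun 'I_r -> nat} -> K) (l : K) : Prop :=
  forall N : int, exists S0 : seq {ffun 'I_r -> nat},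
    forall S : seq {ffun 'I_r -> nat}, uniq S -> {subset S0 <= S} ->
      ordge (\sum_(al <- S) t al - l) N.

Definition ps_conv (r : nat) (a : {ffun 'I_r -> nat} -> K) (y : 'I_r -> K) : Prop :=
  exists l, has_sum (fun al => a al * mono al y) l.

Definition ps_eval (r : nat) (a : {ffun 'I_r -> nat} -> K) (y : 'I_r -> K) : K :=
  epsilon (inhabits 0) (fun l => has_sum (fun al => a al * mono al y) l).

End Padic.

(* Convergence of g at the point (p^n0, ..., p^n0) bounds its terms, so that
   ord a_al >= - C - n0 |al|.  As a_al = 0 for 0 < |al| < k, every nonconstant
   term of g(x^(n)) then has valuation at least k (n - n0) - C, and so does
   g(x^(n)) - 1.  On 1 + pZ_p the logarithm does not lower the valuation of
   g - 1, because the j-th term of its series has valuation at least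
   j ord(g - 1) - log_p j; hence ord(p^(-mn) log_p g(x^(n))) grows like
   (k - m) n. *)

From mathcomp Require Import all_boot all_order all_algebra.
From mathcomp Require Import zify ring.
From Stdlib Require Import ClassicalEpsilon.
Set Implicit Arguments. Unset Strict Implicit. Unset Printing Implicit Defensive.
Import Order.TTheory GRing.Theory Num.Theory.
Local Open Scope ring_scope.

Section Valuation.
Variables (p : nat) (K : fieldType) (ord : K -> int).
Hypothesis HK : is_Qp ord p.
Local Notation og := (ordge ord).

Lemma ord1 : ord 1 = 0.
Proof.
by have := ord_mul HK (oner_neq0 K) (oner_neq0 K); rewrite mulr1; set o := ord 1; lia.
Qed.

Lemma ordN1 : ord (-1) = 0.
Proof.
have N1_neq0 : (-1 : K) != 0 by rewrite oppr_eq0 oner_neq0.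
by have := ord_mul HK N1_neq0 N1_neq0; rewrite mulrNN mulr1 ord1; set o := ord _; lia.
Qed.

Lemma ordV x : x != 0 -> ord x^-1 = - ord x.
Proof.
move=> x0; have := ord_mul HK x0 (invr_neq0 x0).
by rewrite mulfV // ord1; set o := ord x; lia.
Qed.

Lemma ordgeE x N : x != 0 -> og x N -> N <= ord x.
Proof. by move=> /negPf x0 [/eqP|]; rewrite ?x0. Qed.

Lemma ordge_le x N M : M <= N -> og x N -> og x M.
Proof. by move=> le_MN [->|le_Nx]; [left | right; apply: le_trans le_Nx]. Qed.

Lemma ordge1 : og 1 0.
Proof. by right; rewrite ord1. Qed.

Lemma not_ordge_1_1 : ~ og 1 1.
Proof. by move/(ordgeE (oner_neq0 K)); rewrite ord1. Qed.

Lemma ordgeD x y N : og x N -> og y N -> og (x + y) N.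
Proof.
move=> ox oy.
have [->|x0] := eqVneq x 0; first by rewrite add0r.
have [->|y0] := eqVneq y 0; first by rewrite addr0.
have [->|xy0] := eqVneq (x + y) 0; first by left.
right; apply: le_trans (ord_add HK x0 y0 xy0).
by rewrite le_min (ordgeE x0 ox) (ordgeE y0 oy).
Qed.

Lemma ordgeM x y N M : og x N -> og y M -> og (x * y) (N + M).
Proof.
move=> ox oy.
have [->|x0] := eqVneq x 0; first by rewrite mul0r; left.
have [->|y0] := eqVneq y 0; first by rewrite mulr0; left.
by right; rewrite (ord_mul HK) // lerD // ordgeE.
Qed.

Lemma ordgeN x N : og x N -> og (- x) N.
Proof. by move=> ox; rewrite -mulN1r -[N]add0r; apply: ordgeM ox; right; rewrite ordN1. Qed.

Lemma ordgeB x y N : og x N -> og y N -> og (x - y) N.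
Proof. by move=> ox oy; apply: ordgeD ox (ordgeN oy). Qed.

Lemma ordgeX x N j : og x N -> og (x ^+ j) (j%:Z * N).
Proof.
move=> ox; elim: j => [|j IH]; first by rewrite expr0 mul0r; apply: ordge1.
by rewrite exprS -add1n PoszD mulrDl mul1r; apply: ordgeM.
Qed.

Lemma ordge_sum (I : Type) (s : seq I) (P : pred I) (F : I -> K) N :
  (forall i, P i -> og (F i) N) -> og (\sum_(i <- s | P i) F i) N.
Proof.
by move=> oF; apply: (big_ind (og^~ N)) => //; [left | move=> x y; apply: ordgeD].
Qed.

Lemma ordge_prod (I : Type) (s : seq I) (F : I -> K) (e : I -> nat) N :
  (forall i, og (F i) N) ->
  og (\prod_(i <- s) F i ^+ e i) ((\sum_(i <- s) e i)%N%:Z * N).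
Proof.
move=> oF; elim: s => [|i s IH]; first by rewrite !big_nil mul0r; apply: ordge1.
by rewrite !big_cons PoszD mulrDl; apply: ordgeM (ordgeX _ (oF i)) IH.
Qed.

Lemma ordge_natr n : og n%:R 0.
Proof.
elim: n => [|n IH]; first by left.
by rewrite -addn1 natrD; apply: ordgeD IH ordge1.
Qed.

Lemma ordge_intr z : og z%:~R 0.
Proof. by case: z => n; rewrite ?NegzE ?mulrNz; [|apply: ordgeN]; apply: ordge_natr. Qed.

Lemma ord_expp n : (p%:R : K) ^+ n != 0 -> ord (p%:R ^+ n) = n.
Proof.
case: n => [_|n]; first by rewrite expr0 ord1.
rewrite expf_eq0 /= => p0; elim: n => [|n IH]; first by rewrite expr1 (ord_p HK).
by rewrite exprS (ord_mul HK) ?expf_neq0 // IH (ord_p HK); lia.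
Qed.

Lemma ordge_p : og p%:R 1.
Proof. by have [->|p0] := eqVneq (p%:R : K) 0; [left | right; rewrite (ord_p HK)]. Qed.

Lemma ordge_exprzp z : og (p%:R ^ z) z.
Proof.
have [p0|p0] := eqVneq (p%:R : K) 0.
  rewrite p0; case: z => [[|n]|n]; last by left; rewrite /exprz expr0n invr0.
  - by rewrite expr0z; apply: ordge1.
  - by left; rewrite /exprz expr0n.
right; case: z => n; first by rewrite /exprz ord_expp ?expf_neq0.
have -> : (p%:R : K) ^ Negz n = (p%:R ^+ n.+1)^-1 by [].
by rewrite NegzE ordV ?expf_neq0 // ord_expp ?expf_neq0.
Qed.

Lemma conv_to_ordge u l N : conv_to ord u l -> (forall n, og (u n) N) -> og l N.
Proof.
move=> /(_ N) [M ulM] oN.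
have -> : l = u M - (u M - l) by ring.
exact: ordgeB (oN M) (ulM M (leqnn M)).
Qed.

Lemma cauchy_sum (f : nat -> K) m :
  (forall N, exists M, forall j, (M <= j)%N -> og (f j) N) ->
  cauchy ord (fun n => \sum_(m <= j < n.+1) f j).
Proof.
move=> f_small N; have [M fM] := f_small N.
have tail n n' : (maxn M m <= n <= n')%N ->
    og (\sum_(m <= j < n'.+1) f j - \sum_(m <= j < n.+1) f j) N.
  move=> /andP[le_n le_nn']; rewrite (big_cat_nat _ (n := n.+1)) //=; last by lia.
  rewrite addrAC subrr add0r big_seq_cond; apply: ordge_sum => j.
  by rewrite mem_index_iota andbT => ?; apply: fM; lia.
exists (maxn M m) => n n' le_n le_n'; have [le_nn'|lt_n'n] := leqP n n'.
  by rewrite -opprB; apply/ordgeN/tail; rewrite le_n.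
by apply: tail; rewrite le_n' ltnW.
Qed.

Section Prime.
Hypothesis p_pr : prime p.

Lemma not_ordge1_natr j : ~~ (p %| j)%N -> ~ og j%:R 1.
Proof.
move=> pNj oj; have [u _ +] := Bezoutl j (prime_gt0 p_pr).
rewrite (eqP (_ : coprime p j)) ?prime_coprime // => /dvdnP[t def_t].
apply: not_ordge_1_1.
have -> : (1 : K) = t%:R * p%:R - u%:R * j%:R by rewrite -!natrM -def_t natrD addrK.
apply: ordgeB.
  by have := ordgeM (ordge_natr t) ordge_p; rewrite add0r.
by have := ordgeM (ordge_natr u) oj; rewrite add0r.
Qed.

Lemma ord_natr_le j : (j%:R : K) != 0 -> ord j%:R <= (logn p j)%:Z.
Proof.
have [->|j_gt0] := posnP j; first by rewrite eqxx.
have := partnC p j_gt0; rewrite p_part => {1 2}<-.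
rewrite natrM natrX mulf_eq0 negb_or => /andP[pe0 j'0].
rewrite (ord_mul HK) // ord_expp // gerDl leNgt.
apply/negP => ord_j'; apply: (not_ordge1_natr _ (or_intror ord_j')).
by rewrite -p'natE // part_pnat.
Qed.

Lemma ordge_invnatr j : og (j%:R : K)^-1 (- (logn p j)%:Z).
Proof.
have [->|j0] := eqVneq (j%:R : K) 0; first by rewrite invr0; left.
by right; rewrite ordV // lerN2 ord_natr_le.
Qed.

Lemma double_logn_le j : ((logn p j).*2 <= j)%N.
Proof.
have [->|j_gt0] := posnP j; first by rewrite logn0.
have := dvdn_leq j_gt0 (pfactor_dvdnn p j); case: (logn p j) => // e le_pe_j.
have lt_e_2e := ltn_expl e (ltnSn 1).
have le_2p : (2 ^ e.+1 <= p ^ e.+1)%N by rewrite leq_exp2r // prime_gt1.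
by rewrite expnS in le_2p; lia.
Qed.

Lemma near1_neq0 g : og (g - 1) 1 -> g != 0.
Proof.
move=> og1; apply/eqP => g0; apply: not_ordge_1_1.
by rewrite -[1]opprK -(sub0r 1) -g0; apply: ordgeN.
Qed.

Lemma ord_near1 g : og (g - 1) 1 -> ord g = 0.
Proof.
move=> og1; have g0 := near1_neq0 og1.
have: og g 0 by rewrite -(subrK 1 g); apply: ordgeD ordge1; apply: ordge_le og1.
move/(ordgeE g0); rewrite le_eqVlt => /predU1P[//|ord_g]; case: not_ordge_1_1.
have -> : (1 : K) = g - (g - 1) by ring.
by apply: ordgeB og1; right.
Qed.

Lemma ordge_near1X g B j : 0 <= B -> og (g - 1) B -> og (g ^+ j - 1) B.
Proof.
move=> B_ge0 og_B; have og0 : og g 0.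
  by rewrite -(subrK 1 g); apply: ordgeD ordge1; apply: ordge_le og_B.
elim: j => [|j IH]; first by rewrite expr0 subrr; left.
have -> : g ^+ j.+1 - 1 = g ^+ j * (g - 1) + (g ^+ j - 1) by rewrite exprS; ring.
apply: ordgeD IH; have := ordgeM (ordgeX j og0) og_B; by rewrite mulr0 add0r.
Qed.

Lemma ordge_log_term u B j : 1 <= B -> (0 < j)%N -> og (u - 1) B ->
  og ((-1) ^+ j.+1 * (u - 1) ^+ j / j%:R) (B + j%:Z - 1 - (logn p j)%:Z).
Proof.
move=> B_ge1 j_gt0 og_B; rewrite -mulrA.
have := ordgeM (ordgeX j.+1 (ordgeN ordge1))
  (ordgeM (ordgeX j og_B) (ordge_invnatr j)).
by apply: ordge_le; rewrite mulr0 add0r; nia.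
Qed.

Lemma ordge_log_series u B : 1 <= B -> og (u - 1) B -> og (log_series ord u) B.
Proof.
move=> B_ge1 og_B.
pose f j := (-1) ^+ j.+1 * (u - 1) ^+ j / j%:R.
have f_ge j N : (0 < j)%N -> N <= B + j%:Z - 1 - (logn p j)%:Z -> og (f j) N.
  by move=> j_gt0 le_N; apply: ordge_le le_N (ordge_log_term B_ge1 j_gt0 og_B).
have S_ge n : og (\sum_(1 <= j < n.+1) f j) B.
  rewrite big_seq_cond; apply: ordge_sum => j; rewrite mem_index_iota andbT => j_ge1.
  by apply: f_ge => //; have := double_logn_le j; lia.
have S_cauchy : cauchy ord (fun n => \sum_(1 <= j < n.+1) f j).
  apply: cauchy_sum => N; exists (2 * `|N - B| + 2)%N => j le_j.
  by apply: f_ge; [lia | have := double_logn_le j; lia].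
have [l Sl] := Qp_complete HK S_cauchy.
exact: conv_to_ordge (epsilon_spec (inhabits 0) _ (ex_intro _ l Sl)) S_ge.
Qed.

Lemma ordge_logp g B : 1 <= B -> og (g - 1) B -> og (logp ord p g) B.
Proof.
move=> B_ge1 og_B; have og_1 := ordge_le B_ge1 og_B.
rewrite /logp (negPf (near1_neq0 og_1)) (ord_near1 og_1) mulr0 oppr0 expr0z mulr1.
have logn_p1 : logn p p.-1 = 0%N.
  by rewrite logn_coprime // coprimenP // prime_gt0.
have B_ge0 : 0 <= B by lia.
have := ordgeM (ordge_log_series B_ge1 (ordge_near1X _ B_ge0 og_B)) (ordge_invnatr p.-1).
by rewrite logn_p1 oppr0 addr0.
Qed.

(* The axioms of [is_Qp] do not exclude [p%:R = 0]: the field F_p with the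
   trivial valuation satisfies them.  There all elements of positive
   valuation vanish. *)
Section PositiveCharacteristic.
Hypothesis p_char : (p%:R : K) = 0.

Lemma natr_ordge1_eq0 n : og n%:R 1 -> n%:R = 0 :> K.
Proof.
have [/dvdnP[m ->]|pNn] := boolP (p %| n)%N; first by rewrite natrM p_char mulr0.
by move/(not_ordge1_natr pNn).
Qed.

Lemma intr_ordge1_eq0 z : og z%:~R 1 -> z%:~R = 0 :> K.
Proof.
case: z => n; first exact: natr_ordge1_eq0.
rewrite NegzE mulrNz -pmulrn => /ordgeN; rewrite opprK.
by move=> /natr_ordge1_eq0 ->; rewrite oppr0.
Qed.

Lemma ratr_ordge1_eq0 q : og (ratr q) 1 -> ratr q = 0 :> K.
Proof.
rewrite /ratr; have [->|d0] := eqVneq ((denq q)%:~R : K) 0; first by rewrite invr0 mulr0.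
move=> oq; have := ordgeM oq (ordge_intr (denq q)).
by rewrite addr0 mulfVK // => /intr_ordge1_eq0 ->; rewrite mul0r.
Qed.

Lemma ordge1_eq0 z : og z 1 -> z = 0.
Proof.
move=> oz; have [//|z0] := eqVneq z 0; have ord_z := ordgeE z0 oz.
have [q oq] := Qp_Q_dense HK z (ord z + 1).
have q0 : ratr q = 0 :> K.
  apply: ratr_ordge1_eq0; have -> : ratr q = z - (z - ratr q) by ring.
  by apply: ordgeB oz (ordge_le _ oq); lia.
by move: oq; rewrite q0 subr0 => /(ordgeE z0); lia.
Qed.

End PositiveCharacteristic.

End Prime.

Section PowerSeries.
Variable r : nat.
Implicit Types (al : {ffun 'I_r -> nat}) (t a : {ffun 'I_r -> nat} -> K) (y : 'I_r -> K).

Lemma has_sum_bounded t l :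
  has_sum ord t l -> exists C : nat, forall al, og (t al) (- C%:Z).
Proof.
move=> /(_ 0) [S0 tS0]; pose C := (\max_(b <- S0) `|ord (t b)|)%N; exists C => al.
have [al_in|al_out] := boolP (al \in S0).
  have [->|t0] := eqVneq (t al) 0; first by left.
  have le_C : (`|ord (t al)| <= C)%N by apply: (@leq_bigmax_seq _ S0 (fun _ => true)).
  by right; move: le_C; set o := ord (t al); lia.
suff t_ge0 : og (t al) 0 by apply: ordge_le t_ge0; lia.
have S_sum : og (\sum_(b <- undup S0) t b - l) 0.
  by apply: tS0; [apply: undup_uniq | move=> b; rewrite mem_undup].
have alS_sum : og (\sum_(b <- al :: undup S0) t b - l) 0.
  apply: tS0; first by rewrite /= mem_undup al_out undup_uniq.
  by move=> b b_in; rewrite inE mem_undup b_in orbT.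
have -> : t al = (\sum_(b <- al :: undup S0) t b - l) - (\sum_(b <- undup S0) t b - l).
  by rewrite big_cons; ring.
exact: ordgeB.
Qed.

Lemma has_sum_ordge_sub t l al0 B :
  has_sum ord t l -> (forall al, al != al0 -> og (t al) B) -> og (l - t al0) B.
Proof.
move=> /(_ B) [S0 tS0] t_ge.
pose S := al0 :: [seq al <- undup S0 | al != al0].
have rest : og (\sum_(al <- undup S0 | al != al0) t al) B by apply: ordge_sum.
have sum_S : og (\sum_(al <- S) t al - l) B.
  apply: tS0; first by rewrite /= mem_filter eqxx filter_uniq ?undup_uniq.
  by move=> al al_in; rewrite inE mem_filter mem_undup al_in andbT orbN.
move: sum_S; rewrite big_cons big_filter; set s := \sum_(al <- _ | _) _ in rest *.
have -> : l - t al0 = s - (t al0 + s - l) by ring.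
exact: ordgeB.
Qed.

Lemma ps_evalP a y :
  ps_conv ord a y -> has_sum ord (fun al => a al * mono al y) (ps_eval ord a y).
Proof. exact: epsilon_spec. Qed.

Lemma mono0 y : mono [ffun => 0%N] y = 1.
Proof. by apply: big1 => i _; rewrite ffunE expr0. Qed.

Lemma mono_eq0 al y i : al i != 0%N -> y i = 0 -> mono al y = 0.
Proof.
by move=> al_i y_i; rewrite /mono (bigD1 i) //= y_i expr0n (negPf al_i) mul0r.
Qed.

Lemma ordge_mono al y N : (forall i, og (y i) N) -> og (mono al y) ((deg al)%:Z * N).
Proof. exact: ordge_prod. Qed.

Lemma ffun_neq0 al : al != [ffun => 0%N] -> exists i, al i != 0%N.
Proof.
move=> al0; apply/existsP; apply: contraNT al0 => /existsPn al_0.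
by apply/eqP/ffunP => i; rewrite ffunE; apply/eqP/negbNE/al_0.
Qed.

Lemma deg_gt0 al : al != [ffun => 0%N] -> (0 < deg al)%N.
Proof. by move=> /ffun_neq0[i al_i]; rewrite /deg (bigD1 i) //=; lia. Qed.

Lemma ordge_coef a n0 : (p%:R : K) != 0 -> ps_conv ord a (fun _ => p%:R ^+ n0) ->
  exists C : nat, forall al, og (a al) (- C%:Z - (n0 * deg al)%N%:Z).
Proof.
move=> p0 /ps_evalP/has_sum_bounded[C tC]; exists C => al.
have mono_c : mono al (fun _ => (p%:R : K) ^+ n0) = p%:R ^+ (n0 * deg al).
  by rewrite /mono prodrXr exprM.
have -> : a al = a al * mono al (fun _ => p%:R ^+ n0) * p%:R ^ (- (n0 * deg al)%N%:Z).
  by rewrite mono_c -exprnN mulfK ?expf_neq0.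
exact: ordgeM (tC al) (ordge_exprzp _).
Qed.

Lemma ordge_nonconstant_terms a (x : nat -> 'I_r -> K) k N : prime p ->
  (forall al, (0 < deg al < k)%N -> a al = 0) ->
  (forall y, (forall i, og (y i) N) -> ps_conv ord a y) ->
  (forall n i, og (x n i) n%:Z) ->
  exists n1 (C : nat), forall n, (n1 <= n)%N -> forall al, al != [ffun => 0%N] ->
    og (a al * mono al (x n)) ((n%:Z - n1%:Z) * k%:Z - C%:Z).
Proof.
move=> p_pr a_low a_conv x_small.
have [p_char|p0] := eqVneq (p%:R : K) 0.
  exists 1%N, 0%N => n le1n al /ffun_neq0[i al_i]; left.
  rewrite (mono_eq0 al_i) ?mulr0 //; apply: (ordge1_eq0 p_pr p_char).
  by apply: ordge_le (x_small n i); lia.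
have [C a_ge] : exists C : nat, forall al, og (a al) (- C%:Z - (`|N| * deg al)%N%:Z).
  apply: ordge_coef p0 _; apply: a_conv => i.
  by apply: (@ordge_le _ `|N|%:Z); [lia | exact: (ordge_exprzp `|N|)].
exists `|N|%N, C => n le_n al al0.
have [->|a0] := eqVneq (a al) 0; first by rewrite mul0r; left.
have le_k : (k <= deg al)%N.
  by rewrite leqNgt; apply: contra a0 => lt_k; rewrite a_low ?deg_gt0.
have := ordgeM (a_ge al) (ordge_mono al (x_small n)).
by apply: ordge_le; nia.
Qed.

End PowerSeries.

End Valuation.

Theorem lemma3p8 (p : nat) (K : fieldType) (ord : K -> int)
  (HK : is_Qp ord p) (r k : nat)
  (a : {ffun 'I_r -> nat} -> K) (x : nat -> 'I_r -> K) :
  prime p -> odd p -> (0 < r)%N -> (0 < k)%N ->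
  (* g in 1 + (T_1,...,T_r)^k Q_p[[T]] *)
  a [ffun => 0%N] = 1 ->
  (forall al : {ffun 'I_r -> nat}, (0 < deg al < k)%N -> a al = 0) ->
  (* g converges on a neighbourhood of 0 *)
  (exists N : int, forall y : 'I_r -> K,
     (forall i, ordge ord (y i) N) -> ps_conv ord a y) ->
  (* ord_p(x_i^(n)) >= n *)
  (forall (n : nat) (i : 'I_r), ordge ord (x n i) n%:Z) ->
  (exists n0 : nat, forall n : nat, (n0 <= n)%N -> ps_conv ord a (x n)) /\
  (forall m : int, m < k%:Z ->
     conv_to ord
       (fun n : nat => (p%:R : K) ^ (- (m * n%:Z)) * logp ord p (ps_eval ord a (x n)))
       0).
Proof.
move=> p_pr _ _ k_gt0 a0 a_low [N a_conv] x_small.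
have x_conv n : (`|N| <= n)%N -> ps_conv ord a (x n).
  by move=> le_n; apply: a_conv => i; apply: ordge_le (x_small n i); lia.
split; first by exists `|N|%N.
have [n1 [C terms]] := ordge_nonconstant_terms HK p_pr a_low a_conv x_small.
move=> m lt_mk M; exists (`|N| + n1 + (C + n1 * k + `|M| + 1))%N => n le_n.
have g_near1 : ordge ord (ps_eval ord a (x n) - 1) ((n%:Z - n1%:Z) * k%:Z - C%:Z).
  have <- : a [ffun => 0%N] * mono [ffun => 0%N] (x n) = 1 by rewrite a0 mono0 mulr1.
  apply: (has_sum_ordge_sub HK (ps_evalP (x_conv n _))) => [|al al0]; first lia.
  by apply: terms; lia.
have B_ge1 : 1 <= (n%:Z - n1%:Z) * k%:Z - C%:Z by nia.
have := ordge_logp HK p_pr B_ge1 g_near1.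
rewrite subr0 => /(ordgeM HK (ordge_exprzp HK (- (m * n%:Z)))).
by apply: ordge_le; nia.
Qed.
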